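(* Let $p$ be a prime and let $(B_n)_{n\ge1}$ be a sequence of nontrivial finite $p$-groups with $a(B_n)\to\beta$ for some real number $\beta$. Then $a\big((\mathbb{Z}/p\mathbb{Z})^n\wr B_n\big)\to p\beta$ as $n\to\infty$. Consequently, if $\beta$ is an Average Order Limit, then so is $p\beta$, and hence $p^r\beta$ is an Average Order Limit for every nonnegative integer $r$.
   Context: For a finite group $G$, the average order is $a(G)=\frac{1}{|G|}\sum_{g\in G}\mathrm{order}(g)$. For groups $A,B$, let $K=\prod_{b\in B}A$, on which $B$ acts by $x\cdot(\alpha_b)_b=(\alpha_{x^{-1}b})_b$ for $x\in B$; the wreath product $A\wr B$ is the semidirect product $K\rtimes B$ for this action. For a fixed prime $p$, a real number $\beta$ is called an Average Order Limit if there is a sequence of finite $p$-groups $G_n$ with $|G_n|\to\infty$ and $a(G_n)\to\beta$. *)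

From HB Require Import structures.
From mathcomp Require Import all_boot all_order all_algebra all_fingroup all_solvable.
From mathcomp Require Import all_classical all_reals all_analysis.

Set Implicit Arguments.
Unset Strict Implicit.
Unset Printing Implicit Defensive.

Import Order.TTheory GRing.Theory Num.Theory.
Import numFieldNormedType.Exports.

(* Wreath product  A wr B = K ><| B,  K = prod_{b in B} A = {ffun B -> A},  *)
(* with B acting by (x . alpha)_b = alpha_{x^-1 b}.  Elements are pairs    *)

Section Wreath.
Variables A B : finGroupType.

Definition wreath_prod : Type := ({ffun B -> A} * B)%type.

HB.instance Definition _ := Finite.on wreath_prod.

Local Open Scope group_scope.

Definition wr_act (x : B) (f : {ffun B -> A}) : {ffun B -> A} :=
  [ffun b => f (x^-1 * b)].

Definition wr_mul (u v : wreath_prod) : wreath_prod :=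
  ([ffun b => u.1 b * wr_act u.2 v.1 b], u.2 * v.2).
Definition wr_one : wreath_prod := ([ffun => 1], 1).
Definition wr_inv (u : wreath_prod) : wreath_prod :=
  ([ffun b => (u.1 (u.2 * b))^-1], u.2^-1).

Lemma wr_mulA : associative wr_mul.
Proof.
case=> f x [g y] [h z]; rewrite /wr_mul /wr_act /=; congr (_, _).
  by apply/ffunP => b; rewrite !ffunE /= invMg !mulgA.
by rewrite mulgA.
Qed.

Lemma wr_mul1 : left_id wr_one wr_mul.
Proof.
case=> g y; rewrite /wr_mul /wr_act /=; congr (_, _).
  by apply/ffunP => b; rewrite !ffunE invg1 !mul1g.
by rewrite mul1g.
Qed.

Lemma wr_mulV : left_inverse wr_one wr_inv wr_mul.
Proof.
case=> f x; rewrite /wr_mul /wr_act /=; congr (_, _).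
  by apply/ffunP => b; rewrite !ffunE invgK mulVg.
by rewrite mulVg.
Qed.

HB.instance Definition _ :=
  Finite_isGroup.Build wreath_prod wr_mulA wr_mul1 wr_mulV.

End Wreath.

Local Open Scope ring_scope.

Definition avg_order (R : realType) (gT : finGroupType) : R :=
  (\sum_(g : gT) (#[g]%g)%:R) / (#|gT|)%:R.

Definition is_pgroup (p : nat) (gT : finGroupType) : bool :=
  pgroup p [set: gT].

Local Open Scope classical_set_scope.

Definition AOL (R : realType) (p : nat) (beta : R) : Prop :=
  exists G : nat -> finGroupType,
    [/\ forall n, is_pgroup p (G n),
        forall M : nat, exists N : nat, forall n, (N <= n)%N -> (M <= #|G n|)%N
      & (fun n => avg_order R (G n)) @ \oo --> beta].

(* For w = (f, x) in V wr B with V abelian of exponent p, w ^+ #[x] = (g, 1) where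
   g b sums f along the <x>-orbit of b.  Hence #[x] %| #[w] %| #[x] * p, and
   #[w] = #[x] * p as soon as g 1 != 0.  As g 1 is an additive surjective function
   of f, it vanishes for exactly a 1 / #|V| fraction of the f; summing over x gives
   0 <= p a(B) - a(V wr B) <= (p - 1) a(B) / #|V|, which tends to 0 for
   V = (Z/pZ)^(n+1).  Since a wreath product of p-groups is a p-group at least as
   large as its top group, an Average Order Limit beta yields the limit p beta. *)

From HB Require Import structures.
From mathcomp Require Import all_boot all_order all_algebra all_fingroup all_solvable.
From mathcomp Require Import all_classical all_reals all_analysis.
From mathcomp Require Import ring lra.

Set Implicit Arguments.
Unset Strict Implicit.
Unset Printing Implicit Defensive.

Import Order.TTheory GRing.Theory Num.Theory.
Import numFieldNormedType.Exports.
Local Open Scope group_scope.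
Local Open Scope ring_scope.

Section WreathAbelian.
Variables (V : finZmodType) (B : finGroupType).
Local Notation W := (wreath_prod V B).

Lemma wreath_mul_fst (u v : W) b : (u * v)%g.1 b = u.1 b + v.1 (u.2^-1 * b)%g.
Proof. by rewrite /= !ffunE. Qed.

Lemma wreath_expg (f : {ffun B -> V}) (x : B) n :
  (((f, x) : W) ^+ n)%g = ([ffun b => \sum_(i < n) f ((x ^+ i)^-1 * b)%g], (x ^+ n)%g).
Proof.
elim: n => [|n IHn].
  by rewrite expg0; congr (_, _); apply/ffunP => b; rewrite !ffunE big_ord0.
rewrite expgS; congr (_, _).
  apply/ffunP => b; rewrite wreath_mul_fst IHn !ffunE big_ord_recl /= expg0 invg1 mul1g.
  by congr (_ + _); apply: eq_bigr => i _; rewrite expgS invMg mulgA.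
by rewrite IHn /= expgS.
Qed.

Lemma dvdn_order_wreath (f : {ffun B -> V}) (x : B) : (#[x] %| #[(f, x) : W])%N.
Proof.
rewrite order_dvdn; apply/eqP.
by have := expg_order ((f, x) : W); rewrite wreath_expg => /(congr1 snd).
Qed.

Definition cycle_sum (x : B) (f : {ffun B -> V}) : V :=
  \sum_(i < #[x]) f ((x ^+ i)^-1)%g.

Lemma order_wreath_ndvdn (f : {ffun B -> V}) (x : B) :
  cycle_sum x f != 0 -> ~~ (#[(f, x) : W] %| #[x])%N.
Proof.
apply: contraNN; rewrite order_dvdn wreath_expg => /eqP/(congr1 (fun w : W => w.1 1%g)).
rewrite !ffunE => sum0; apply/eqP; rewrite -[RHS]sum0.
by apply: eq_bigr => i _; rewrite mulg1.
Qed.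

Definition delta1 (a : V) : {ffun B -> V} := [ffun b => if b == 1%g then a else 0].

Lemma cycle_sumD x (f g : {ffun B -> V}) :
  cycle_sum x (f + g) = cycle_sum x f + cycle_sum x g.
Proof. by rewrite -big_split; apply: eq_bigr => i _; rewrite ffunE. Qed.

Lemma cycle_sum_delta1 x a : cycle_sum x (delta1 a) = a.
Proof.
rewrite /cycle_sum -(prednK (order_gt0 x)) big_ord_recl /= !ffunE expg0 invg1 eqxx.
rewrite big1 ?addr0 // => i _; rewrite ffunE invg_eq1.
suff /negbTE-> : (x ^+ (bump 0 i) != 1)%g by [].
rewrite -order_dvdn /bump leq0n add1n; apply/negP => /(dvdn_leq (ltn0Sn _)).
by rewrite leqNgt -[X in (_ < X)%N](prednK (order_gt0 x)) ltnS ltn_ord.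
Qed.

Lemma sum_order_wreath :
  (\sum_(w : W) #[w] = \sum_(x : B) \sum_(f : {ffun B -> V}) #[(f, x) : W])%N.
Proof. by rewrite exchange_big pair_big; apply: eq_bigr => -[]. Qed.

End WreathAbelian.

Section WreathElementaryAbelian.
Variables (p : nat) (V : finZmodType) (B : finGroupType).
Hypothesis p_pr : prime p.
Hypothesis V_charp : forall v : V, v *+ p = 0.
Local Notation W := (wreath_prod V B).
Local Notation K := {ffun B -> V}.

Lemma order_wreath_dvdn (f : K) (x : B) : (#[(f, x) : W] %| #[x] * p)%N.
Proof.
rewrite order_dvdn expgM wreath_expg expg_order wreath_expg expg1n.
apply/eqP; congr (_, _); apply/ffunP => b; rewrite !ffunE.
under eq_bigr do rewrite expg1n invg1 mul1g.
by rewrite sumr_const card_ord V_charp.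
Qed.

Lemma order_wreath_cycle_sum_neq0 (f : K) (x : B) :
  cycle_sum x f != 0 -> #[(f, x) : W] = (#[x] * p)%N.
Proof.
move=> /order_wreath_ndvdn ndvd_x.
have /dvdnP[m def_w] := dvdn_order_wreath f x.
have := order_wreath_dvdn f x; rewrite def_w mulnC dvdn_pmul2l ?order_gt0 // => m_dvd_p.
have m_neq1 : m != 1%N by apply: contraNneq ndvd_x; rewrite def_w => ->; rewrite mul1n.
by rewrite (prime_nt_dvdP p_pr m_neq1 m_dvd_p) mulnC.
Qed.

Lemma order_wreath_ge (f : K) (x : B) :
  (#[x] * p <= #[(f, x) : W] + (cycle_sum x f == 0%R) * (#[x] * p.-1))%N.
Proof.
have [_|/order_wreath_cycle_sum_neq0->] := eqVneq (cycle_sum x f) 0; last first.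
  by rewrite mul0n addn0.
rewrite mul1n -[in X in (X <= _)%N](prednK (prime_gt0 p_pr)) mulnS leq_add2r.
by rewrite dvdn_leq ?order_gt0 ?dvdn_order_wreath.
Qed.

Lemma card_cycle_sum_eq0 (x : B) :
  (#|V| * \sum_(f : K) (cycle_sum x f == 0%R))%N = #|K|.
Proof.
have fibre a :
    (\sum_(f : K | cycle_sum x f == a) 1 = \sum_(f : K) (cycle_sum x f == 0%R))%N.
  rewrite (reindex_inj (addrI (delta1 B a))) big_mkcond /=.
  apply: eq_bigr => f _; rewrite cycle_sumD cycle_sum_delta1 -[X in _ == X]addr0.
  by rewrite (inj_eq (addrI a)); case: eqP.
rewrite -[RHS]sum1_card [RHS](partition_big (cycle_sum x) predT) //=.
by rewrite (eq_bigr _ (fun a _ => fibre a)) sum_nat_const.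
Qed.

Lemma sum_order_wreath_fibre_le (x : B) :
  (\sum_(f : K) #[(f, x) : W] <= #|K| * (#[x] * p))%N.
Proof.
rewrite -sum_nat_const; apply: leq_sum => f _.
by rewrite dvdn_leq ?muln_gt0 ?order_gt0 ?prime_gt0 ?order_wreath_dvdn.
Qed.

Lemma sum_order_wreath_fibre_ge (x : B) :
  (#|V| * (#|K| * (#[x] * p)) <=
     #|V| * \sum_(f : K) #[(f, x) : W] + #|K| * (#[x] * p.-1))%N.
Proof.
rewrite -[in X in (_ <= _ + X)%N](card_cycle_sum_eq0 x) -mulnA -mulnDr leq_mul2l.
apply/orP; right; rewrite -sum_nat_const big_distrl -big_split /=.
by apply: leq_sum => f _; apply: order_wreath_ge.
Qed.

Lemma sum_order_wreath_le :
  (\sum_(w : W) #[w] <= #|K| * ((\sum_(x : B) #[x]) * p))%N.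
Proof.
rewrite sum_order_wreath big_distrl big_distrr /=.
by apply: leq_sum => x _; apply: sum_order_wreath_fibre_le.
Qed.

Lemma sum_order_wreath_ge :
  (#|V| * (#|K| * ((\sum_(x : B) #[x]) * p)) <=
     #|V| * \sum_(w : W) #[w] + #|K| * ((\sum_(x : B) #[x]) * p.-1))%N.
Proof.
rewrite sum_order_wreath !big_distrl /= !big_distrr /= -big_split /=.
by apply: leq_sum => x _; apply: sum_order_wreath_fibre_ge.
Qed.

Lemma avg_order_wreath_bounds (R : realType) :
  0 <= p%:R * avg_order R B - avg_order R W <= (p.-1)%:R * avg_order R B / #|V|%:R.
Proof.
have le_sum := sum_order_wreath_le; have ge_sum := sum_order_wreath_ge.
rewrite /avg_order card_prod -!natr_sum.
set S := (\sum_(w : W) #[w])%N in le_sum ge_sum *.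
set T := (\sum_(x : B) #[x])%N in le_sum ge_sum *.
have leR : S%:R <= #|K|%:R * (T%:R * p%:R) :> R by rewrite -!natrM ler_nat.
have geR : #|V|%:R * (#|K|%:R * (T%:R * p%:R)) <=
           #|V|%:R * S%:R + #|K|%:R * (T%:R * (p.-1)%:R) :> R.
  by rewrite -!natrM -natrD ler_nat.
have K_gt0 : 0 < #|K|%:R :> R by rewrite ltr0n; apply/card_gt0P; exists 0.
have B_gt0 : 0 < #|B|%:R :> R by rewrite ltr0n; apply/card_gt0P; exists 1%g.
have V_gt0 : 0 < #|V|%:R :> R by rewrite ltr0n; apply/card_gt0P; exists 0.
have KB_gt0 : 0 < #|K|%:R * #|B|%:R :> R by rewrite mulr_gt0.
rewrite natrM.
have -> : p%:R * (T%:R / #|B|%:R) - S%:R / (#|K|%:R * #|B|%:R) =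
          (#|K|%:R * (T%:R * p%:R) - S%:R) / (#|K|%:R * #|B|%:R) :> R.
  by field; rewrite !gt_eqF.
have -> : (p.-1)%:R * (T%:R / #|B|%:R) / #|V|%:R =
          (#|K|%:R * (T%:R * (p.-1)%:R) / #|V|%:R) / (#|K|%:R * #|B|%:R) :> R.
  by field; rewrite !gt_eqF.
rewrite divr_ge0 ?subr_ge0 ?(ltW KB_gt0) //= ler_pM2r ?invr_gt0 // ler_pdivlMr //.
lra.
Qed.

End WreathElementaryAbelian.

Lemma card_wreath (A B : finGroupType) :
  #|{: wreath_prod A B}| = (#|A| ^ #|B| * #|B|)%N.
Proof. by rewrite card_prod card_ffun. Qed.

Lemma pgroup_wreath (p : nat) (A B : finGroupType) :
  is_pgroup p A -> is_pgroup p B -> is_pgroup p (wreath_prod A B).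
Proof.
rewrite /is_pgroup /pgroup !cardsT card_wreath => pA pB.
by rewrite pnatM pnatX pA pB.
Qed.

Lemma card_row_Zp (p k : nat) : prime p -> #|{: 'rV['Z_p]_k}| = (p ^ k)%N.
Proof. by move=> p_pr; rewrite card_mx mul1n card_ord Zp_cast ?prime_gt1. Qed.

Lemma row_Zp_mulrn_p (p k : nat) (v : 'rV['Z_p]_k) : prime p -> v *+ p = 0.
Proof. by move=> p_pr; rewrite -scaler_nat pchar_Zp ?prime_gt1 ?scale0r. Qed.

Lemma pgroup_row_Zp (p k : nat) : prime p -> is_pgroup p 'rV['Z_p]_k.
Proof.
by move=> p_pr; rewrite /is_pgroup /pgroup cardsT card_row_Zp // pnatX pnat_id.
Qed.

Local Open Scope classical_set_scope.

Lemma cvg_avg_order_wreath (R : realType) (p : nat) (V : nat -> finZmodType)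
    (B : nat -> finGroupType) (beta : R) :
  prime p -> (forall n (v : V n), v *+ p = 0) ->
  (fun n => (#|V n|%:R : R)^-1) @ \oo --> 0 ->
  (fun n => avg_order R (B n)) @ \oo --> beta ->
  (fun n => avg_order R (wreath_prod (V n) (B n))) @ \oo --> p%:R * beta.
Proof.
move=> p_pr V_charp inv_cardV avgB.
apply: (cvg_sub0 _ (cvgM (cvg_cst (p%:R : R)) avgB)).
pose gap n := (p.-1)%:R * avg_order R (B n) / #|V n|%:R.
apply: (@squeeze_cvgr _ _ _ _ (- gap) (cst 0)).
- apply: nearW => n /=.
  have /andP[gap_ge0 gap_le] := avg_order_wreath_bounds (B n) p_pr (V_charp n) R.
  rewrite /gap !fctE /GRing.mul_fun; lra.
- rewrite -oppr0; apply: cvgN; rewrite -(mulr0 ((p.-1)%:R * beta)).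
  by apply: cvgM => //; apply: cvgM => //; apply: cvg_cst.
- exact: cvg_cst.
Qed.

Lemma cvg_inv_card_row_Zp (R : realType) (p : nat) :
  prime p -> (fun n => (#|'rV['Z_p]_n.+1|%:R : R)^-1) @ \oo --> 0.
Proof.
move=> p_pr; apply: (@squeeze_cvgr _ _ _ _ (cst 0) (@harmonic R)).
- apply: nearW => n /=; rewrite invr_ge0 ler0n (card_row_Zp _ p_pr) /=.
  rewrite lef_pV2 ?posrE ?ltr0n ?expn_gt0 ?(prime_gt0 p_pr) //.
  by rewrite ler_nat ltnW // ltn_expl // prime_gt1.
- exact: cvg_cst.
- exact: cvg_harmonic.
Qed.

Lemma cvg_avg_order_wreath_row (R : realType) (p : nat) (B : nat -> finGroupType)
    (beta : R) :
  prime p -> (fun n => avg_order R (B n)) @ \oo --> beta ->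
  (fun n => avg_order R (wreath_prod 'rV['Z_p]_n.+1 (B n))) @ \oo --> p%:R * beta.
Proof.
move=> p_pr.
apply: (cvg_avg_order_wreath (V := fun n => 'rV['Z_p]_n.+1 : finZmodType)) => //.
  by move=> n v; apply: row_Zp_mulrn_p.
exact: cvg_inv_card_row_Zp.
Qed.

Lemma AOL_mulp (R : realType) (p : nat) (beta : R) :
  prime p -> AOL p beta -> AOL p (p%:R * beta).
Proof.
move=> p_pr [G [pG cardG avgG]].
exists (fun n => wreath_prod 'rV['Z_p]_n.+1 (G n) : finGroupType); split.
- by move=> n; apply: pgroup_wreath (pgroup_row_Zp _ p_pr) (pG n).
- move=> M; have [N leMG] := cardG M; exists N => n /leMG leM.
  rewrite card_wreath (leq_trans leM) // leq_pmull //.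
  by rewrite expn_gt0 card_row_Zp // expn_gt0 prime_gt0.
- exact: cvg_avg_order_wreath_row.
Qed.

Lemma AOL_mul_expn (R : realType) (p : nat) (beta : R) :
  prime p -> AOL p beta -> forall r, AOL p ((p ^ r)%:R * beta).
Proof.
move=> p_pr AOLbeta; elim=> [|r IHr]; first by rewrite expn0 mul1r.
by rewrite expnS natrM -mulrA; apply: AOL_mulp.
Qed.

(* B k plays the role of B_(k+1), paired with (Z/pZ)^(k+1) = 'rV['Z_p]_k.+1. *)
Theorem theorem7 (R : realType) (p : nat) (B : nat -> finGroupType) (beta : R) :
  prime p ->
  (forall n, is_pgroup p (B n)) ->
  (forall n, (1 < #|B n|)%N) ->
  (fun n => avg_order R (B n)) @ \oo --> beta ->
  [/\ (fun n => avg_order R (wreath_prod ('rV['Z_p]_(n.+1)) (B n))) @ \oo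
        --> p%:R * beta,
      AOL p beta -> AOL p (p%:R * beta)
    & AOL p beta -> forall r : nat, AOL p ((p ^ r)%:R * beta)].
Proof.
move=> p_pr _ _ avgB; split.
- exact: cvg_avg_order_wreath_row.
- exact: AOL_mulp.
- exact: AOL_mul_expn.
Qed.
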